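(* Let $P$ be a finite lattice and $f,g\in\mathcal{L}_P$. If $w\in\mathcal{L}_P$ is prime and $w\le f+g$, then there exist prime $u,v\in\mathcal{L}_P$ with $u\le f$, $v\le g$ and $w\le u+v$.
   Context: $P$ is a finite lattice. $\mathcal{L}_P$ is the set of maps $f:P\to P$ satisfying (A.1) $a\le f(a)$; (A.2) $a\le b\Rightarrow f(a)\le f(b)$; (A.3) $f(f(a))=f(a)$, ordered pointwise ($f\le g$ iff $f(a)\le g(a)$ for all $a$); it is a lattice with join $+$. $\Phi f=\{a:f(a)=a\}$. $f$ is prime if $P\setminus\Phi f$ is closed under $\wedge$. *)

From HB Require Import structures.
From mathcomp Require Import all_boot all_order.
Set Implicit Arguments. Unset Strict Implicit. Unset Printing Implicit Defensive.
Import Order.Theory.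
Local Open Scope order_scope.

Section ClosureOps.
Context {d : Order.disp_t} {P : finTBLatticeType d}.

(* f is in L_P: extensive (A.1), monotone (A.2), idempotent (A.3) *)
Definition closure_op (f : P -> P) : Prop :=
  [/\ forall a, a <= f a,
      forall a b, a <= b -> f a <= f b &
      forall a, f (f a) = f a].

Definition le_op (f g : P -> P) : Prop := forall a, f a <= g a.

Definition join_op (f g : P -> P) : P -> P :=
  fun a => \meet_(x : P | (a <= x) && (f x == x) && (g x == x)) x.

(* Phi f = fixed points; f prime iff P \ Phi f is closed under meet *)
Definition prime_op (f : P -> P) : Prop :=
  forall a b, f a != a -> f b != b -> f (a `&` b) != a `&` b.

End ClosureOps.

(** A prime closure operator u is the same thing as its set S of non-fixed
    points: a set closed under meets whose complement is closed under meets
    and contains the top; u is recovered by sending a to the least element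
    above a outside S.  So it suffices to split the non-fixed points N of w,
    which lie in those of f or of g, into two such sets Su and Sv, avoiding
    the fixed points of f and of g respectively.  This is done greedily from
    the bottom: the least element m of N above the current base is moved by
    f, say; then the points above m but not above f m form such a set
    avoiding Φf, and the construction restarts above f m. *)

From HB Require Import structures.
From mathcomp Require Import all_boot all_order.
Set Implicit Arguments. Unset Strict Implicit. Unset Printing Implicit Defensive.
Import Order.Theory.
Local Open Scope order_scope.

Section PrimeClosures.
Variables (d : Order.disp_t) (P : finTBLatticeType d).
Implicit Types (f g w : P -> P) (S N : P -> bool) (a b c h m x : P).

Definition meet_closed N : Prop := forall a b, N a -> N b -> N (a `&` b).

Definition prime_set S : Prop :=
  [/\ meet_closed S, meet_closed (fun x => ~~ S x) & ~~ S \top].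

Definition fix_closure S : P -> P :=
  fun a => \meet_(x : P | (a <= x) && ~~ S x) x.

Definition up c : pred P := [pred x | c <= x].

Definition up_diff m h : P -> bool := fun x => (m <= x) && ~~ (h <= x).

Lemma fix_closure_ge S a : a <= fix_closure S a.
Proof. by apply/meetsP => x /andP[]. Qed.

Lemma fix_closure_id S a : ~~ S a -> fix_closure S a = a.
Proof.
by move=> Sa; apply: le_anti; rewrite fix_closure_ge andbT meets_inf ?lexx.
Qed.

Lemma fix_closure_notin S : prime_set S -> forall a, ~~ S (fix_closure S a).
Proof.
case=> _ meetC topC a.
by apply: (big_ind (fun y => ~~ S y)) => // x /andP[].
Qed.

Lemma fix_closure_neq S : prime_set S -> forall a, (fix_closure S a != a) = S a.
Proof.
move=> PS a; case Sa: (S a); last by rewrite fix_closure_id ?Sa ?eqxx.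
by apply: contraTneq (fix_closure_notin PS a) => ->; rewrite Sa.
Qed.

Lemma fix_closure_op S : prime_set S -> closure_op (fix_closure S).
Proof.
move=> PS; split; first exact: fix_closure_ge.
- move=> a b ab; apply/meetsP => x /andP[bx Sx].
  by rewrite meets_inf // (le_trans ab bx) Sx.
- by move=> a; rewrite fix_closure_id // fix_closure_notin.
Qed.

Lemma fix_closure_prime S : prime_set S -> prime_op (fix_closure S).
Proof.
move=> PS a b; rewrite !fix_closure_neq //; case: PS => meetS _ _; exact: meetS.
Qed.

Lemma fix_closure_le S f : closure_op f -> (forall x, S x -> f x != x) ->
  le_op (fix_closure S) f.
Proof.
move=> [f_ge _ f_idem] Sf a; rewrite meets_inf // f_ge /=.
by apply/negP => /Sf; rewrite f_idem eqxx.
Qed.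

Lemma fixed_le_join w f g x : le_op w (join_op f g) -> closure_op w ->
  f x = x -> g x = x -> w x = x.
Proof.
move=> wfg [w_ge _ _] fx gx; apply: le_anti; rewrite w_ge andbT.
by rewrite (le_trans (wfg x)) // meets_inf // lexx fx gx !eqxx.
Qed.

Lemma le_op_join w f g : closure_op w ->
  (forall x, f x = x -> g x = x -> w x = x) -> le_op w (join_op f g).
Proof.
move=> [_ w_mono _] fgw a; apply/meetsP => x /andP[/andP[ax /eqP fx] /eqP gx].
by rewrite -(fgw x fx gx) w_mono.
Qed.

Lemma prime_set_up_diff m h S : m <= h -> prime_set S ->
  (forall x, S x -> h <= x) -> prime_set (fun x => up_diff m h x || S x).
Proof.
rewrite /up_diff => mh [meetS meetC topC] Sh.
have Sm x : S x -> m <= x by move/Sh; apply: le_trans.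
split; last by rewrite !lex1.
- move=> a b /orP[/andP[ma ha]|Sa] /orP[/andP[mb hb]|Sb].
  + by rewrite lexI ma mb lexI (negbTE ha).
  + by rewrite lexI ma Sm // lexI (negbTE ha).
  + by rewrite lexI mb Sm // lexI (negbTE hb) andbF.
  + by rewrite meetS ?orbT.
- move=> a b; rewrite !negb_or !negb_and !negbK.
  case/andP=> [mha Sa] /andP[mhb Sb]; apply/andP; split; last exact: meetC.
  rewrite !lexI; case/orP: mha => [ma|ha]; first by rewrite (negbTE ma).
  case/orP: mhb => [mb|hb]; first by rewrite (negbTE mb) andbF.
  by rewrite ha hb orbT.
Qed.

Lemma card_up_lt c h : c < h -> (#|up h| < #|up c|)%N.
Proof.
move=> ch; apply/proper_card/properP; split.
  by apply/subsetP => x; rewrite !inE; apply: le_trans (ltW ch).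
by exists c; rewrite !inE ?lexx // lt_geF.
Qed.

Lemma meet_closed_bigmeet N (Q : pred P) x0 : meet_closed N -> N x0 -> Q x0 ->
  N (\meet_(x | N x && Q x) x).
Proof.
move=> meetN Nx0 Qx0.
have <- : x0 `&` \meet_(x | N x && Q x) x = \meet_(x | N x && Q x) x.
  by apply/meet_idPr/meets_inf; rewrite Nx0.
apply: (big_ind (fun y => N (x0 `&` y))); first by rewrite meetx1.
  by move=> y z Ny Nz; rewrite -(meetxx x0) meetACA; apply: meetN.
by move=> y /andP[Ny _]; apply: meetN.
Qed.

Record splits f g N c (Su Sv : P -> bool) : Prop := Splits {
  splits_prime_l : prime_set Su;
  splits_prime_r : prime_set Sv;
  splits_nonfix_l : forall x, Su x -> f x != x;
  splits_nonfix_r : forall x, Sv x -> g x != x;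
  splits_above_l : forall x, Su x -> c <= x;
  splits_above_r : forall x, Sv x -> c <= x;
  splits_cover : forall x, N x -> c <= x -> Su x || Sv x }.

Lemma splits_sym f g N c Su Sv : splits f g N c Su Sv -> splits g f N c Sv Su.
Proof. by case=> *; split=> // x Nx cx; rewrite orbC; auto. Qed.

Lemma splits_extend f g N c m Su Sv : closure_op f -> f m != m -> c <= m ->
  (forall x, N x -> c <= x -> m <= x) -> splits f g N (f m) Su Sv ->
  splits f g N c (fun x => up_diff m (f m) x || Su x) Sv.
Proof.
move=> [f_ge f_mono _] fm cm m_min [PSu PSv Suf Svg Su_fm Sv_fm cover].
have c_fm : c <= f m by rewrite (le_trans cm) ?f_ge.
split=> //.
- exact: prime_set_up_diff.
- move=> x /orP[/andP[mx fmx]|/Suf //].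
  by apply: contraNneq fmx => <-; rewrite f_mono.
- by move=> x /orP[/andP[mx _]|/Su_fm]; [apply: le_trans mx | apply: le_trans].
- by move=> x /Sv_fm; apply: le_trans.
- move=> x Nx cx; rewrite /up_diff (m_min x Nx cx) /=.
  by case: (boolP (f m <= x)) => // fmx; rewrite -orbA cover ?orbT.
Qed.

Lemma exists_splits f g N : closure_op f -> closure_op g -> meet_closed N ->
  (forall x, N x -> (f x != x) || (g x != x)) ->
  forall c, exists Su Sv, splits f g N c Su Sv.
Proof.
move=> Cf Cg meetN Nfg c; have [n] := ubnP #|up c|; elim: n c => // n IH c.
rewrite ltnS => c_n.
case: (pickP [pred x | N x && (c <= x)]) => [x0 /andP[Nx0 cx0]|noN]; last first.
  exists (fun _ => false), (fun _ => false).
  by split=> // x Nx cx; have := noN x; rewrite /= Nx cx.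
pose m := \meet_(x | N x && (c <= x)) x.
have Nm : N m by apply: meet_closed_bigmeet Nx0 cx0.
have cm : c <= m by apply/meetsP => x /andP[].
have m_min x : N x -> c <= x -> m <= x by move=> Nx cx; rewrite meets_inf ?Nx.
have IHm (k : P -> P) : closure_op k -> k m != m ->
    exists Su Sv, splits f g N (k m) Su Sv.
  move=> [k_ge _ _] km; apply: IH; apply: leq_trans c_n; apply: card_up_lt.
  by rewrite (le_lt_trans cm) // lt_neqAle eq_sym km k_ge.
case/orP: (Nfg m Nm) => [fm|gm].
  have [Su [Sv split_fm]] := IHm f Cf fm.
  by do 2 eexists; apply: splits_extend split_fm.
have [Su [Sv /splits_sym split_gm]] := IHm g Cg gm.
by do 2 eexists; apply/splits_sym/(splits_extend Cg gm cm m_min split_gm).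
Qed.

End PrimeClosures.

Theorem mainTheorem18 (d : Order.disp_t) (P : finTBLatticeType d)
  (f g w : P -> P) :
  closure_op f -> closure_op g -> closure_op w ->
  prime_op w -> le_op w (join_op f g) ->
  exists u v : P -> P,
    closure_op u /\ closure_op v /\ prime_op u /\ prime_op v /\
    le_op u f /\ le_op v g /\ le_op w (join_op u v).
Proof.
move=> Cf Cg Cw prime_w w_fg.
have Nfg x : w x != x -> (f x != x) || (g x != x).
  by apply: contraR; rewrite negb_or !negbK => /andP[/eqP fx /eqP gx];
     apply/eqP/(fixed_le_join w_fg).
have [Su [Sv [PSu PSv Suf Svg _ _ cover]]] := exists_splits Cf Cg prime_w Nfg \bot.
exists (fix_closure Su), (fix_closure Sv).
do 2 (split; first exact: fix_closure_op).
do 2 (split; first exact: fix_closure_prime).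
do 2 (split; first exact: fix_closure_le).
apply: le_op_join => // x /eqP ux /eqP vx; apply/eqP.
apply: contraLR ux => wx; rewrite fix_closure_neq //.
by move: (cover x wx (le0x x)); rewrite -(fix_closure_neq PSv) vx orbF.
Qed.
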